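(* Let $M$ be a free $\mathbb{T}$-module with a finite $\mathbb{T}$-basis, $V$ its associated complex vector space, and $(\cdot,\cdot)$ a bicomplex scalar product on $M$ which is hyperbolic positive and closed on $V$. Then for every $\widehat X\in M$ and $k=1,2$, $$P_k\big((\widehat X,\widehat X)\big)=(\widehat X_{\mathbf{e_k}},\widehat X_{\mathbf{e_k}})=\|\widehat X_{\mathbf{e_k}}\|^2 .$$
   Context: Bicomplex numbers: $\mathbb{T}=\{z_1+z_2\mathbf{i_2}: z_1,z_2\in\mathbb{C}(\mathbf{i_1})\}$, $\mathbb{C}(\mathbf{i_1})=\{x+y\mathbf{i_1}: x,y\in\mathbb{R}\}$, $\mathbf{i_1}^2=\mathbf{i_2}^2=-1$, $\mathbf{i_1}\mathbf{i_2}=\mathbf{i_2}\mathbf{i_1}=\mathbf{j}$, $\mathbf{j}^2=1$ (commutative). Hyperbolic numbers $\mathbb{D}=\{x+y\mathbf{j}:x,y\in\mathbb{R}\}$. Idempotents $\mathbf{e_1}=(1+\mathbf{j})/2$, $\mathbf{e_2}=(1-\mathbf{j})/2$. Every $w=z_1+z_2\mathbf{i_2}$ is uniquely $w=(z_1-z_2\mathbf{i_1})\mathbf{e_1}+(z_1+z_2\mathbf{i_1})\mathbf{e_2}$; set $P_1(w)=z_1-z_2\mathbf{i_1}$, $P_2(w)=z_1+z_2\mathbf{i_1}$. Conjugation: $(z_1+z_2\mathbf{i_2})^{\dagger_3}=\overline{z_1}-\overline{z_2}\mathbf{i_2}$. $\mathbb{D}^+=\{a\mathbf{e_1}+b\mathbf{e_2}: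 a,b\ge 0\}$. $M$ has $\mathbb{T}$-basis $\{\widehat m_1,\dots,\widehat m_n\}$, $V=\{\sum x_l\widehat m_l: x_l\in\mathbb{C}(\mathbf{i_1})\}$; for $\widehat X=\sum x_l\widehat m_l$ with $x_l=x_{1l}\mathbf{e_1}+x_{2l}\mathbf{e_2}$, $x_{kl}\in\mathbb{C}(\mathbf{i_1})$, put $\widehat X_{\mathbf{e_k}}=\sum_l x_{kl}\widehat m_l\in V$. A bicomplex scalar product is a map $(\cdot,\cdot):M\times M\to\mathbb{T}$ with: $(\widehat X,\widehat Y_1+\widehat Y_2)=(\widehat X,\widehat Y_1)+(\widehat X,\widehat Y_2)$; $(\widehat X,\alpha\widehat Y)=\alpha(\widehat X,\widehat Y)$ for $\alpha\in\mathbb{T}$; $(\widehat X,\widehat Y)=(\widehat Y,\widehat X)^{\dagger_3}$; $(\widehat X,\widehat X)=0\iff\widehat X=0$. Hyperbolic positive: $(\widehat X,\widehat X)\in\mathbb{D}^+$ for all $\widehat X$. Closed on $V$: $(\widehat X,\widehat Y)\in\mathbb{C}(\mathbf{i_1})$ for $\widehat X,\widehat Y\in V$. For $\widehat Z\in V$, $\|\widehat Z\|=(\widehat Z,\widehat Z)^{1/2}$. *)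

From HB Require Import structures.
From mathcomp Require Import all_boot all_order all_algebra.
From mathcomp Require Import complex reals.
From mathcomp Require Import ring.
Set Implicit Arguments. Unset Strict Implicit. Unset Printing Implicit Defensive.
Import Order.TTheory GRing.Theory Num.Theory.
Local Open Scope ring_scope.

(** * Bicomplex numbers  T = { z1 + z2 i2 : z1, z2 in C(i1) } *)
Record bicomplex (R : realType) := BiC { bc1 : R[i]; bc2 : R[i] }.
Arguments BiC {R}.

Section Bicomplex.
Variable R : realType.
Local Notation C := R[i].
Local Notation T := (bicomplex R).

Definition bc_pair (w : T) : C * C := (bc1 w, bc2 w).
Definition pair_bc (p : C * C) : T := BiC p.1 p.2.
Lemma bc_pairK : cancel bc_pair pair_bc. Proof. by case. Qed.

HB.instance Definition _ := Equality.copy T (can_type bc_pairK).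
HB.instance Definition _ := Choice.copy T (can_type bc_pairK).

Definition bc_zero : T := BiC 0 0.
Definition bc_add (w v : T) : T := BiC (bc1 w + bc1 v) (bc2 w + bc2 v).
Definition bc_opp (w : T) : T := BiC (- bc1 w) (- bc2 w).
(* (z1 + z2 i2)(w1 + w2 i2) = (z1 w1 - z2 w2) + (z1 w2 + z2 w1) i2 *)
Definition bc_mul (w v : T) : T :=
  BiC (bc1 w * bc1 v - bc2 w * bc2 v) (bc1 w * bc2 v + bc2 w * bc1 v).
Definition bc_one : T := BiC 1 0.

Lemma bc_addA : associative bc_add.
Proof. by move=> [a b] [c d] [e f]; rewrite /bc_add /=; congr BiC; ring. Qed.
Lemma bc_addC : commutative bc_add.
Proof. by move=> [a b] [c d]; rewrite /bc_add /=; congr BiC; ring. Qed.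
Lemma bc_add0 : left_id bc_zero bc_add.
Proof. by move=> [a b]; rewrite /bc_add /=; congr BiC; ring. Qed.
Lemma bc_addN : left_inverse bc_zero bc_opp bc_add.
Proof. by move=> [a b]; rewrite /bc_add /bc_zero /=; congr BiC; ring. Qed.

HB.instance Definition _ := GRing.isZmodule.Build T bc_addA bc_addC bc_add0 bc_addN.

Lemma bc_mulA : associative bc_mul.
Proof. by move=> [a b] [c d] [e f]; rewrite /bc_mul /=; congr BiC; ring. Qed.
Lemma bc_mulC : commutative bc_mul.
Proof. by move=> [a b] [c d]; rewrite /bc_mul /=; congr BiC; ring. Qed.
Lemma bc_mul1 : left_id bc_one bc_mul.
Proof. by move=> [a b]; rewrite /bc_mul /=; congr BiC; ring. Qed.
Lemma bc_mulDl : left_distributive bc_mul (+%R : T -> T -> T).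
Proof.
move=> [a b] [c d] [e f].
rewrite /bc_mul; congr BiC; rewrite /= ; ring.
Qed.
Lemma bc_one_neq0 : bc_one != 0.
Proof.
apply/negP => /eqP/(congr1 (@bc1 R)) /= /eqP. by rewrite oner_eq0.
Qed.

HB.instance Definition _ :=
  GRing.Zmodule_isComNzRing.Build T bc_mulA bc_mulC bc_mul1 bc_mulDl bc_one_neq0.

Definition bc_of (z : C) : T := BiC z 0.
Definition bc_i1 : T := BiC 'i%C 0.
Definition bc_i2 : T := BiC 0 1.
Definition bc_j : T := bc_i1 * bc_i2.
Definition bc_e1 : T := bc_of (2^-1) * (1 + bc_j).
Definition bc_e2 : T := bc_of (2^-1) * (1 - bc_j).
(** idempotent components: w = P1(w) e1 + P2(w) e2 *)
Definition P1 (w : T) : C := bc1 w - bc2 w * 'i%C.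
Definition P2 (w : T) : C := bc1 w + bc2 w * 'i%C.
Definition conj3 (w : T) : T := BiC ((bc1 w)^*)%C (- (bc2 w)^*)%C.
Definition bc_real (x : R) : T := bc_of (x%:C)%C.
Definition hyp_pos (w : T) : Prop :=
  exists a b : R, 0 <= a /\ 0 <= b /\ w = bc_real a * bc_e1 + bc_real b * bc_e2.
Definition in_Ci1 (w : T) : Prop := exists z : C, w = bc_of z.
Definition hsqrt (w : T) : T :=
  bc_real (Num.sqrt (complex.Re (P1 w))) * bc_e1
  + bc_real (Num.sqrt (complex.Re (P2 w))) * bc_e2.
End Bicomplex.

Section Module.
Variables (R : realType) (M : lmodType (bicomplex R)) (n : nat) (m : 'I_n -> M).

Definition is_Tbasis : Prop :=
  (forall x : 'I_n -> bicomplex R, \sum_l x l *: m l = 0 -> forall l, x l = 0)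
  /\ (forall X : M, exists x : 'I_n -> bicomplex R, X = \sum_l x l *: m l).

Definition in_V (X : M) : Prop :=
  exists x : 'I_n -> R[i], X = \sum_l bc_of (x l) *: m l.

(** X_{e_k} for X = sum_l x_l m_l : components P_k(x_l) *)
Definition comp_e1 (x : 'I_n -> bicomplex R) : M := \sum_l bc_of (P1 (x l)) *: m l.
Definition comp_e2 (x : 'I_n -> bicomplex R) : M := \sum_l bc_of (P2 (x l)) *: m l.

Variable sp : M -> M -> bicomplex R.

Definition bicomplex_scalar_product : Prop :=
  [/\ forall X Y1 Y2, sp X (Y1 + Y2) = sp X Y1 + sp X Y2,
      forall X Y (a : bicomplex R), sp X (a *: Y) = a * sp X Y,
      forall X Y, sp X Y = conj3 (sp Y X)
    & forall X, sp X X = 0 <-> X = 0].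

Definition hyperbolic_positive : Prop := forall X, hyp_pos (sp X X).

Definition closed_on_V : Prop := forall X Y, in_V X -> in_V Y -> in_Ci1 (sp X Y).

Definition bnorm (Z : M) : bicomplex R := hsqrt (sp Z Z).
End Module.

From HB Require Import structures.
From mathcomp Require Import all_boot all_order all_algebra.
From mathcomp Require Import complex reals.
From mathcomp Require Import ring.
Import Order.TTheory GRing.Theory Num.Theory.
Local Open Scope ring_scope.

(* The idempotent components P1, P2 are ring morphisms T -> C(i1) which
   jointly determine an element of T; under them e1, e2 become (1, 0), (0, 1)
   and dagger_3 becomes complex conjugation in each component.  Writing
   X = e1 X_e1 + e2 X_e2, sesquilinearity and e1 e2 = 0 give
   (X, X) = (X_e1, X_e1) e1 + (X_e2, X_e2) e2, and closedness on V puts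
   (X_ek, X_ek) in C(i1), so P_k reads it off.  For the norm, the hyperbolic
   square root of a e1 + b e2 in D+ is sqrt a e1 + sqrt b e2, whose square is
   a e1 + b e2 again. *)

Section IdempotentCoordinates.
Context {R : realType}.
Local Notation C := R[i].
Local Notation T := (bicomplex R).
Local Notation e1 := (bc_e1 R).
Local Notation e2 := (bc_e2 R).

Lemma mulii : 'i%C * 'i%C = -1 :> C.
Proof. by rewrite -expr2 sqr_i. Qed.

Lemma mulV2 : 2^-1 * 2 = 1 :> C.
Proof. by rewrite mulVf // pnatr_eq0. Qed.

Lemma P1_is_zmod_morphism : zmod_morphism (@P1 R).
Proof. by move=> [a b] [c d]; rewrite /P1 /=; ring. Qed.

Lemma P2_is_zmod_morphism : zmod_morphism (@P2 R).
Proof. by move=> [a b] [c d]; rewrite /P2 /=; ring. Qed.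

Lemma P1_is_monoid_morphism : monoid_morphism (@P1 R).
Proof.
split; first by rewrite /P1 /= mul0r subr0.
by move=> [a b] [c d]; rewrite /P1 /=; ring: mulii.
Qed.

Lemma P2_is_monoid_morphism : monoid_morphism (@P2 R).
Proof.
split; first by rewrite /P2 /= mul0r addr0.
by move=> [a b] [c d]; rewrite /P2 /=; ring: mulii.
Qed.

HB.instance Definition _ := GRing.isZmodMorphism.Build T C (@P1 R) P1_is_zmod_morphism.
HB.instance Definition _ := GRing.isMonoidMorphism.Build T C (@P1 R) P1_is_monoid_morphism.
HB.instance Definition _ := GRing.isZmodMorphism.Build T C (@P2 R) P2_is_zmod_morphism.
HB.instance Definition _ := GRing.isMonoidMorphism.Build T C (@P2 R) P2_is_monoid_morphism.

Lemma bc_P12E (w : T) :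
  w = BiC (2^-1 * (P1 w + P2 w)) (2^-1 * 'i%C * (P1 w - P2 w)).
Proof.
move: (2^-1 : C) mulV2 => h half.
by case: w => a b; rewrite /P1 /P2 /=; congr BiC; ring: half mulii.
Qed.

Lemma P12_inj (w v : T) : P1 w = P1 v -> P2 w = P2 v -> w = v.
Proof. by move=> eq1 eq2; rewrite [w]bc_P12E [v]bc_P12E eq1 eq2. Qed.

Lemma P1_bc_of (z : C) : P1 (bc_of z) = z.
Proof. by rewrite /P1 /= mul0r subr0. Qed.

Lemma P2_bc_of (z : C) : P2 (bc_of z) = z.
Proof. by rewrite /P2 /= mul0r addr0. Qed.

Lemma P1_j : P1 (bc_j R) = 1.
Proof. by rewrite /P1 /=; ring: mulii. Qed.

Lemma P2_j : P2 (bc_j R) = -1.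
Proof. by rewrite /P2 /=; ring: mulii. Qed.

Lemma P1_e1 : P1 e1 = 1.
Proof. by rewrite /bc_e1 rmorphM rmorphD rmorph1 /= P1_bc_of P1_j mulV2. Qed.

Lemma P2_e1 : P2 e1 = 0.
Proof. by rewrite /bc_e1 rmorphM rmorphD rmorph1 /= P2_j subrr mulr0. Qed.

Lemma P1_e2 : P1 e2 = 0.
Proof. by rewrite /bc_e2 rmorphM rmorphB rmorph1 /= P1_j subrr mulr0. Qed.

Lemma P2_e2 : P2 e2 = 1.
Proof. by rewrite /bc_e2 rmorphM rmorphB rmorph1 /= P2_bc_of P2_j opprK mulV2. Qed.

Lemma P1_idempotent_sum (u v : T) : P1 (u * e1 + v * e2) = P1 u.
Proof. by rewrite rmorphD (rmorphM _ u) (rmorphM _ v) /= P1_e1 P1_e2 mulr1 mulr0 addr0. Qed.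

Lemma P2_idempotent_sum (u v : T) : P2 (u * e1 + v * e2) = P2 v.
Proof. by rewrite rmorphD (rmorphM _ u) (rmorphM _ v) /= P2_e1 P2_e2 mulr1 mulr0 add0r. Qed.

Lemma idempotent_decomp (w : T) : w = bc_of (P1 w) * e1 + bc_of (P2 w) * e2.
Proof.
by apply: P12_inj; rewrite ?P1_idempotent_sum ?P2_idempotent_sum ?P1_bc_of ?P2_bc_of.
Qed.

Lemma mul_e1e1 : e1 * e1 = e1.
Proof. by apply: P12_inj; rewrite (rmorphM _ e1) /= ?P1_e1 ?P2_e1 ?mulr1 ?mulr0. Qed.

Lemma mul_e2e2 : e2 * e2 = e2.
Proof. by apply: P12_inj; rewrite (rmorphM _ e2) /= ?P1_e2 ?P2_e2 ?mulr1 ?mulr0. Qed.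

Lemma mul_e1e2 : e1 * e2 = 0.
Proof. by apply: P12_inj; rewrite (rmorphM _ e1) !rmorph0 /= ?P1_e2 ?P2_e1 ?mulr0 ?mul0r. Qed.

Lemma P1_conj3 (w : T) : P1 (conj3 w) = (P1 w)^*%C.
Proof.
case: w => [[a1 a2] [b1 b2]]; apply/eqP; rewrite eq_complex /=.
by apply/andP; split; apply/eqP; ring.
Qed.

Lemma P2_conj3 (w : T) : P2 (conj3 w) = (P2 w)^*%C.
Proof.
case: w => [[a1 a2] [b1 b2]]; apply/eqP; rewrite eq_complex /=.
by apply/andP; split; apply/eqP; ring.
Qed.

Lemma conj3_is_zmod_morphism : zmod_morphism (@conj3 R).
Proof.
by move=> w v; apply: P12_inj; rewrite rmorphB /= ?P1_conj3 ?P2_conj3 -!rmorphB.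
Qed.

Lemma conj3_is_monoid_morphism : monoid_morphism (@conj3 R).
Proof.
split=> [|w v]; apply: P12_inj;
  by rewrite ?rmorphM /= ?P1_conj3 ?P2_conj3 ?rmorph1 ?rmorphM.
Qed.

HB.instance Definition _ := GRing.isZmodMorphism.Build T T (@conj3 R) conj3_is_zmod_morphism.
HB.instance Definition _ := GRing.isMonoidMorphism.Build T T (@conj3 R) conj3_is_monoid_morphism.

Lemma conj3_e1 : conj3 e1 = e1.
Proof. by apply: P12_inj; rewrite ?P1_conj3 ?P2_conj3 ?P1_e1 ?P2_e1 ?rmorph1 ?rmorph0. Qed.

Lemma conj3_e2 : conj3 e2 = e2.
Proof. by apply: P12_inj; rewrite ?P1_conj3 ?P2_conj3 ?P1_e2 ?P2_e2 ?rmorph1 ?rmorph0. Qed.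

Lemma sqr_hsqrt (w : T) : hyp_pos w -> hsqrt w ^+ 2 = w.
Proof.
move=> [a [b [a0 [b0 ->]]]]; rewrite /hsqrt /bc_real.
rewrite P1_idempotent_sum P2_idempotent_sum P1_bc_of P2_bc_of /=.
by apply: P12_inj; rewrite rmorphXn /= ?P1_idempotent_sum ?P2_idempotent_sum
  ?P1_bc_of ?P2_bc_of -rmorphXn sqr_sqrtr.
Qed.

End IdempotentCoordinates.

Section ScalarProduct.
Context {R : realType} {M : lmodType (bicomplex R)} {sp : M -> M -> bicomplex R}.

Lemma sqr_bnorm (sp_pos : hyperbolic_positive sp) (Y : M) : bnorm sp Y ^+ 2 = sp Y Y.
Proof. exact: sqr_hsqrt. Qed.

Hypothesis sp_bicomplex : bicomplex_scalar_product sp.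
Local Notation e1 := (bc_e1 R).
Local Notation e2 := (bc_e2 R).

Lemma sp_addl (X1 X2 Y : M) : sp (X1 + X2) Y = sp X1 Y + sp X2 Y.
Proof. by have [spD _ spC _] := sp_bicomplex; rewrite spC spD rmorphD /= -!spC. Qed.

Lemma sp_scalel (a : bicomplex R) (X Y : M) : sp (a *: X) Y = conj3 a * sp X Y.
Proof. by have [_ spZ spC _] := sp_bicomplex; rewrite spC spZ rmorphM /= -spC. Qed.

Lemma sp_idempotent_split (X1 X2 : M) :
  sp (e1 *: X1 + e2 *: X2) (e1 *: X1 + e2 *: X2) = sp X1 X1 * e1 + sp X2 X2 * e2.
Proof.
have [spD spZ _ _] := sp_bicomplex.
rewrite !sp_addl !spD !sp_scalel !spZ conj3_e1 conj3_e2.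
move: (@mul_e1e1 R) (@mul_e2e2 R) (@mul_e1e2 R); move: e1 e2 => u v uu vv uv.
ring: uu vv uv.
Qed.

End ScalarProduct.

Section BasisExpansion.
Context {R : realType} {M : lmodType (bicomplex R)} {n : nat}.
Variables (m : 'I_n -> M) (x : 'I_n -> bicomplex R).

Lemma sum_idempotent_decomp :
  \sum_l x l *: m l = bc_e1 R *: comp_e1 m x + bc_e2 R *: comp_e2 m x.
Proof.
rewrite /comp_e1 /comp_e2 !scaler_sumr -big_split /=; apply: eq_bigr => l _.
rewrite !scalerA -scalerDl {1}(idempotent_decomp (x l)).
by rewrite (mulrC (bc_e1 R)) (mulrC (bc_e2 R)).
Qed.

Lemma comp_e1_in_V : in_V m (comp_e1 m x).
Proof. by exists (fun l => P1 (x l)). Qed.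

Lemma comp_e2_in_V : in_V m (comp_e2 m x).
Proof. by exists (fun l => P2 (x l)). Qed.

End BasisExpansion.

Theorem mainTheorem9 (R : realType) (M : lmodType (bicomplex R)) (n : nat)
    (m : 'I_n -> M) (sp : M -> M -> bicomplex R) :
  is_Tbasis m ->
  bicomplex_scalar_product sp ->
  hyperbolic_positive sp ->
  closed_on_V m sp ->
  forall (X : M) (x : 'I_n -> bicomplex R), X = \sum_l x l *: m l ->
    (bc_of (P1 (sp X X)) = sp (comp_e1 m x) (comp_e1 m x)
     /\ sp (comp_e1 m x) (comp_e1 m x) = bnorm sp (comp_e1 m x) ^+ 2)
 /\ (bc_of (P2 (sp X X)) = sp (comp_e2 m x) (comp_e2 m x)
     /\ sp (comp_e2 m x) (comp_e2 m x) = bnorm sp (comp_e2 m x) ^+ 2).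
Proof.
move=> _ sp_bicomplex sp_pos sp_closed X x ->.
rewrite sum_idempotent_decomp (sp_idempotent_split sp_bicomplex) !(sqr_bnorm sp_pos).
have [z1 ->] := sp_closed _ _ (comp_e1_in_V m x) (comp_e1_in_V m x).
have [z2 ->] := sp_closed _ _ (comp_e2_in_V m x) (comp_e2_in_V m x).
by rewrite P1_idempotent_sum P2_idempotent_sum P1_bc_of P2_bc_of.
Qed.
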